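(* Let $0<\alpha<1$ and $1\le i\le k\le 6$, and let $\omega^{(k,i)}_m$, $m\ge0$, be the convolution weights defined in the context. Then $\sum_{m=0}^{\infty}|\omega^{(k,i)}_m|<\infty$.
   Context: Uniform grid $t_n=n\Delta t$, $\Delta t>0$, $I_j=[t_{j-1},t_j]$. For a function $u$ and integers $m\ge1$, $j$, $q$, let $p^{m}_{j,q}$ be the polynomial of degree at most $m$ interpolating $u$ at $t_{j+q-m-1},\dots,t_{j+q-1}$. For $1\le i\le k\le 6$ and $n\ge k$, let $P^{k}_{i,n}$ be the continuous piecewise polynomial on $[0,t_n]$ equal on $I_j$ to $p^{k-1}_{j,k-j}$ for $1\le j\le k-i$, to $p^{k}_{j,i}$ for $k-i+1\le j\le n-i+1$, and to $p^{k}_{j,n+1-j}$ for $n-i+2\le j\le n$, and set $D^{\alpha}_{k,i}u_n=\frac{1}{\Gamma(1-\alpha)}\int_0^{t_n}(t_n-\xi)^{-\alpha}(P^{k}_{i,n})'(\xi)\,\mathrm{d}\xi$. This is a linear combination of $u_0=u(t_0),\dots,u_n=u(t_n)$; for $k\le j\le n$ the coefficient of $u_j$ in $(\Delta t)^{\alpha}D^{\alpha}_{k,i}u_n$ depends only on $n-j$ and is denoted $\omega^{(k,i)}_{n-j}$; this defines $\omega^{(k,i)}_m$ for all $m\ge 0$. *)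

From HB Require Import structures.
From mathcomp Require Import all_boot all_order all_algebra.
From mathcomp Require Import all_classical all_reals all_analysis.
Set Implicit Arguments. Unset Strict Implicit. Unset Printing Implicit Defensive.
Import Order.TTheory GRing.Theory Num.Theory.
Import numFieldNormedType.Exports.
Local Open Scope classical_set_scope.
Local Open Scope ring_scope.

Section FracWeights.
Variable R : realType.

Definition Gamma (s : R) : R :=
  Rintegral (@lebesgue_measure R) `]0, +oo[
            (fun x => powR x (s - 1) * expR (- x)).

Definition tgrid (dt : R) (l : nat) : R := l%:R * dt.

Definition interp (dt : R) (u : nat -> R) (s m : nat) : {poly R} :=
  \sum_(a < m.+1)
     u (s + a)%N *: \prod_(b < m.+1 | b != a)
        ((tgrid dt (s + a)%N - tgrid dt (s + b)%N)^-1 *: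
           ('X - (tgrid dt (s + b)%N)%:P)).

(* p^m_{j,q}: interpolates u at t_(j+q-m-1), ..., t_(j+q-1)
   (only used with j+q >= m+1, so the nat subtraction is exact). *)
Definition pjq (dt : R) (u : nat -> R) (m j q : nat) : {poly R} :=
  interp dt u (j + q - m.+1)%N m.

Definition piece (dt : R) (u : nat -> R) (k i n j : nat) : {poly R} :=
  if (j <= k - i)%N then pjq dt u k.-1 j (k - j)
  else if (j <= n - i + 1)%N then pjq dt u k j i
  else pjq dt u k j (n + 1 - j).

Definition Pderiv (dt : R) (u : nat -> R) (k i n : nat) (xi : R) : R :=
  \sum_(1 <= j < n.+1)
     (if (tgrid dt j.-1 < xi) && (xi <= tgrid dt j)
      then (piece dt u k i n j)^`().[xi] else 0).

Definition Dfrac (alpha dt : R) (k i n : nat) (u : nat -> R) : R :=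
  (Gamma (1 - alpha))^-1 *
  Rintegral (@lebesgue_measure R) `[0, tgrid dt n]
    (fun xi => powR (tgrid dt n - xi) (- alpha) * Pderiv dt u k i n xi).

(* omega^{(k,i)}_m : coefficient of u_j in (dt)^alpha D^alpha_{k,i} u_n with
   n - j = m, computed with j = k, n = m + k (coefficient = value of the
   linear functional on the grid delta function at j). *)
Definition omega (alpha dt : R) (k i m : nat) : R :=
  powR dt alpha * Dfrac alpha dt k i (m + k)%N (fun l => (l == k)%:R).

End FracWeights.

(* For n >= 3k+1 the piecewise interpolant of the grid delta at t_k has a
   nonzero derivative only on [0, t_(2k+1)], and there it does not depend on n.
   Being continuous and vanishing at 0 and at t_(2k+1), its derivative has zero
   integral, so (t_n - xi)^(-alpha) may be replaced by
   (t_n - xi)^(-alpha) - t_n^(-alpha) = O(t_n^(-alpha-1)) on [0, t_(2k+1)].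
   Hence omega_m = O(m^(-alpha-1)), which is summable. *)

From HB Require Import structures.
From mathcomp Require Import all_boot all_order all_algebra.
From mathcomp Require Import all_classical all_reals all_analysis.
From mathcomp Require Import ring lra zify.
Set Implicit Arguments. Unset Strict Implicit. Unset Printing Implicit Defensive.
Import Order.TTheory GRing.Theory Num.Theory.
Import numFieldNormedType.Exports.
Local Open Scope classical_set_scope.
Local Open Scope ring_scope.

Section powR_series.
Variable R : realType.

Lemma continuous_powR (r x : R) : 0 < x -> {for x, continuous (fun y : R => y `^ r)}.
Proof.
move=> x0; apply: differentiable_continuous; apply/derivable1_diffP.
by apply: derivable_powR; rewrite in_itv /= andbT.
Qed.

Lemma powRN_sub_succ_ge (a x : R) : 0 < a -> 0 < x ->
  a * (x + 1) `^ (- a - 1) <= x `^ (- a) - (x + 1) `^ (- a).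
Proof.
move=> a0 x0.
have [c cin Ec] : exists2 c, c \in `]x, x + 1[ &
    (x + 1) `^ (- a) - x `^ (- a) = - a * c `^ (- a - 1) * (x + 1 - x).
  apply: (MVT (f := fun y => y `^ (- a)) (df := fun y => - a * y `^ (- a - 1))).
  - by rewrite ltrDl.
  - by move=> y; rewrite in_itv /= => /andP[xy _]; apply: is_derive1_powR; lra.
  - apply: continuous_in_subspaceT => y; rewrite inE /= in_itv /= => /andP[xy _].
    by apply: continuous_powR; lra.
move: cin; rewrite in_itv /= => /andP[xc c1].
rewrite addrAC subrr add0r mulr1 mulNr -opprB in Ec.
rewrite (oppr_inj Ec) ler_pM2l // -opprD !powRN lef_pV2 ?posrE ?powR_gt0 //; try lra.
by apply: ge0_ler_powR; rewrite ?nnegrE; lra.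
Qed.

Lemma natr_powRN_le (s : R) m n : 0 <= s -> (0 < m <= n)%N ->
  n%:R `^ (- s) <= m%:R `^ (- s).
Proof.
move=> s0 /andP[m0 mn].
rewrite !powRN lef_pV2 ?posrE ?powR_gt0 ?ltr0n //; try lia.
by apply: ge0_ler_powR; rewrite ?nnegrE ?ler_nat.
Qed.

Lemma is_cvg_series_natr_powRN (s : R) : 1 < s ->
  cvgn (series (fun n : nat => n%:R `^ (- s))).
Proof.
move=> s1; set u := fun n : nat => _.
pose a := s - 1; have a0 : 0 < a by rewrite /a subr_gt0.
have Es : - s = - a - 1 by rewrite /a; ring.
have telescoped n : a * \sum_(0 <= l < n) u l.+2 <= 1 - n.+1%:R `^ (- a).
  elim: n => [|n IH]; first by rewrite big_geq // mulr0 powR1 subrr.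
  rewrite big_nat_recr //= mulrDr /u Es.
  have := @powRN_sub_succ_ge a n.+1%:R a0 (ltr0Sn _ _); rewrite natr1.
  by rewrite /u Es in IH; lra.
apply: nondecreasing_is_cvgn.
  by apply: nondecreasing_series => *; apply: powR_ge0.
exists (u 0%N + u 1%N + a^-1) => _ [n _ <-].
apply: (@le_trans _ _ (series u n.+2)).
  by apply: nondecreasing_series => // *; [apply: powR_ge0 | rewrite leqW].
rewrite /series /= big_nat_recl // big_nat_recl // addrA lerD2l.
rewrite -(ler_pM2l a0) mulfV ?gt_eqF //.
by have := telescoped n; have := @powR_ge0 R n.+1%:R (- a); lra.
Qed.

Lemma is_cvg_series_le_natr_powRN (s C : R) (N : nat) (f : nat -> R) : 1 < s ->
  (forall n, 0 <= f n) -> (forall n, (N <= n)%N -> f n <= C * n%:R `^ (- s)) ->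
  cvgn (series f).
Proof.
move=> s1 f0 fC.
pose g n := if (n < N)%N then f n else C * n%:R `^ (- s).
apply: (@series_le_cvg R f g) => // [n|n|].
- by rewrite /g; case: ltnP => // Nn; exact: le_trans (f0 n) (fC n Nn).
- by rewrite /g; case: ltnP => // Nn; exact: fC.
rewrite -(@is_cvg_series_restrict N).
have -> : (fun n => \sum_(N <= l < n) g l) =
    (fun n => \sum_(N <= l < n) (C *: fun l : nat => l%:R `^ (- s)) l).
  by apply/funext => n; apply: eq_big_nat => l /andP[Nl _]; rewrite /g ltnNge Nl.
rewrite (@is_cvg_series_restrict N).
exact/is_cvg_seriesZ/is_cvg_series_natr_powRN.
Qed.

End powR_series.

Section Rintegral_sum.
Context d (T : measurableType d) (R : realType) (mu : {measure set T -> \bar R}).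

Lemma Rintegral_sum (D : set T) (s : seq nat) (F : nat -> T -> R) : measurable D ->
  (forall j, j \in s -> mu.-integrable D (EFin \o F j)) ->
  \int[mu]_(x in D) (\sum_(j <- s) F j x) = \sum_(j <- s) \int[mu]_(x in D) F j x.
Proof.
move=> mD; elim: s => [|j s IH] Fs.
  by under eq_Rintegral do rewrite big_nil; rewrite Rintegral_cst // mul0r big_nil.
have Fs' l : l \in s -> mu.-integrable D (EFin \o F l).
  by move=> ls; apply: Fs; rewrite inE ls orbT.
have Is : mu.-integrable D (EFin \o fun x => \sum_(l <- s) F l x).
  have -> : EFin \o (fun x => \sum_(l <- s) F l x) =
      (fun x => \sum_(l <- s | l \in s) (F l x)%:E)%E.
    by apply/funext => x /=; rewrite -big_seq sumEFin.
  exact: integrable_sum.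
under eq_Rintegral do rewrite big_cons.
by rewrite big_cons RintegralD // ?IH //; apply: Fs; rewrite mem_head.
Qed.

End Rintegral_sum.

Section interval_integrals.
Variable R : realType.
Local Notation mu := (@lebesgue_measure R).

Lemma integrable_itv_continuous (f : R -> R) a b :
  (forall x, a <= x <= b -> {for x, continuous f}) ->
  mu.-integrable `[a, b] (EFin \o f).
Proof.
move=> cf; apply: continuous_compact_integrable; first exact: segment_compact.
by apply: continuous_in_subspaceT => x; rewrite inE /= in_itv /=; exact: cf.
Qed.

Lemma patch_itv_ocE (f : R -> R) (a b x : R) :
  (if (a < x) && (x <= b) then f x else 0) = (f \_ `]a, b]) x.
Proof.
by rewrite patchE; congr (if _ then _ else _); apply/idP/idP; rewrite in_setE /= in_itv.
Qed.

Section patch_itv_oc.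
Variables (f : R -> R) (lo hi a b : R).
Hypotheses (lo_a : lo <= a) (b_hi : b <= hi).
Hypothesis cf : forall x, a <= x <= b -> {for x, continuous f}.

Let itv_oc_sub : `]a, b] `<=` `[lo, hi].
Proof.
move=> x /=; rewrite !in_itv /= => /andP[ax xb].
by rewrite (le_trans lo_a (ltW ax)) (le_trans xb b_hi).
Qed.

Let integrable_itv_oc : mu.-integrable `]a, b] (EFin \o f).
Proof.
apply: integrableS (integrable_itv_continuous cf) => //; exact: subset_itv_oc_cc.
Qed.

Lemma integrable_patch_itv_oc : mu.-integrable `[lo, hi] (EFin \o f \_ `]a, b]).
Proof.
by rewrite -restrict_EFin; apply/integrable_restrict => //; rewrite setIidr.
Qed.

Lemma Rintegral_patch_itv_oc :
  \int[mu]_(x in `[lo, hi]) (f \_ `]a, b]) x = \int[mu]_(x in `[a, b]) f x.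
Proof.
by rewrite -Rintegral_mkcondr setIidr // Rintegral_itv_obnd_cbnd.
Qed.

End patch_itv_oc.

Lemma Rintegral_deriv_poly (p : {poly R}) a b : a < b ->
  \int[mu]_(x in `[a, b]) p^`().[x] = p.[b] - p.[a].
Proof.
move=> ab; rewrite /Rintegral (continuous_FTC2 (F := horner p) ab) //.
- by apply: continuous_subspaceT; exact: continuous_horner.
- split; first by move=> x _; exact: derivable_horner.
  + by apply: cvg_at_right_filter; exact: continuous_horner.
  + by apply: cvg_at_left_filter; exact: continuous_horner.
- by move=> x _; rewrite derivE.
Qed.

Lemma le_norm_Rintegral_weight (w p : R -> R) (a b c e : R) :
  (forall x, a <= x <= b -> {for x, continuous w}) -> continuous p ->
  (forall x, a <= x <= b -> `|w x - c| <= e) ->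
  `|\int[mu]_(x in `[a, b]) (w x * p x) - c * \int[mu]_(x in `[a, b]) p x|
    <= e * \int[mu]_(x in `[a, b]) `|p x|.
Proof.
move=> cw cp wce.
have cwp x : a <= x <= b -> {for x, continuous (fun y => w y * p y)}.
  by move=> xab; apply: continuousM; [exact: cw|exact: cp].
have ccp x : {for x, continuous (fun y => c * p y)}.
  by apply: continuousM; [exact: cst_continuous|exact: cp].
have cdiff x : a <= x <= b -> {for x, continuous (fun y => w y * p y - c * p y)}.
  by move=> xab; apply: continuousB; [exact: cwp|exact: ccp].
have Ip := integrable_itv_continuous (fun x _ => cp x).
have Iwp := integrable_itv_continuous cwp.
rewrite -RintegralZl // -RintegralB //; last exact: integrable_itv_continuous.
apply: le_trans (le_normr_Rintegral _ _) _ => //.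
  by apply: integrable_itv_continuous => x xab; exact: cdiff.
rewrite -RintegralZl //; last first.
  by apply: integrable_itv_continuous => x _; apply: continuous_comp; [exact: cp|exact: norm_continuous].
apply: le_Rintegral => //.
- apply: integrable_itv_continuous => x xab.
  by apply: continuous_comp; [exact: cdiff|exact: norm_continuous].
- apply: integrable_itv_continuous => x _; apply: continuousM; first exact: cst_continuous.
  by apply: continuous_comp; [exact: cp|exact: norm_continuous].
move=> x; rewrite /= in_itv /= => xab.
by rewrite -mulrBl normrM ler_wpM2r // wce.
Qed.

End interval_integrals.

Section kernel.
Variable R : realType.

Lemma continuous_powR_subr (T r x : R) : x < T ->
  {for x, continuous (fun y => (T - y) `^ r)}.
Proof.
move=> xT; apply: (continuous_comp (f := fun y => T - y) (g := fun z => z `^ r)).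
  by apply: continuousB; [exact: cst_continuous|].
by apply: continuous_powR; rewrite subr_gt0.
Qed.

Lemma normr_powRN_subr_le (al T b x : R) : 0 <= al <= 1 -> 0 < T -> 2 * b <= T ->
  0 <= x <= b -> `|(T - x) `^ (- al) - T `^ (- al)| <= 2 * b * T `^ (- al - 1).
Proof.
move=> /andP[al0 al1] T0 bT /andP[x0 xb].
set y := (T - x) / T.
have y0 : 0 < y by rewrite /y divr_gt0 //; lra.
have y1 : y <= 1 by rewrite /y ler_pdivrMr // mul1r; lra.
have ET : (T - x) `^ (- al) = T `^ (- al) * (y `^ al)^-1.
  by rewrite -powRN -powRM ?(ltW T0) ?(ltW y0) // /y mulrC divfK ?gt_eqF.
have ET1 : T `^ (- al - 1) = T `^ (- al) / T.
  by rewrite powRB ?(gt_eqF T0) ?implybT // powRr1 // ltW.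
have yal1 : y `^ al <= 1.
  by rewrite -(powRr0 y); apply: ger_powR; rewrite ?y0 ?y1.
have yyal : y <= y `^ al by apply: ger1_powR; rewrite ?y0 ?y1.
have yal0 : 0 < y `^ al by rewrite powR_gt0.
have Hz : `|(y `^ al)^-1 - 1| <= y^-1 - 1.
  have h1 : (y `^ al)^-1 <= y^-1 by rewrite lef_pV2 ?posrE.
  have h2 : 1 <= (y `^ al)^-1 by rewrite -invr1 lef_pV2 ?posrE.
  by rewrite ger0_norm; lra.
(* [1/y - 1 = x / (T - x) <= 2 x / T] because [x <= b <= T / 2] *)
have Hy : y^-1 - 1 <= 2 * b / T.
  have Tx : 0 < T - x by lra.
  have -> : y^-1 - 1 = x / (T - x) by rewrite /y invf_div; field; rewrite gt_eqF.
  by rewrite ler_pdivrMr // mulrAC ler_pdivlMr //; nra.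
rewrite ET ET1 -[X in _ - X]mulr1 -mulrBr normrM ger0_norm ?powR_ge0 //.
rewrite mulrCA -mulrA ler_pM2l ?powR_gt0 //.
by rewrite mulrA; exact: le_trans Hz Hy.
Qed.

End kernel.

Section grid_interpolation.
Variable R : realType.
Implicit Types (dt : R) (u : nat -> R).

Lemma tgrid_ge0 dt p : 0 < dt -> 0 <= tgrid dt p.
Proof. by move=> dt0; rewrite /tgrid mulr_ge0 // ltW. Qed.

Lemma ler_tgrid dt p q : 0 < dt -> (p <= q)%N -> tgrid dt p <= tgrid dt q.
Proof. by move=> dt0 pq; rewrite /tgrid ler_pM2r // ler_nat. Qed.

Lemma ltr_tgrid dt p q : 0 < dt -> (p < q)%N -> tgrid dt p < tgrid dt q.
Proof. by move=> dt0 pq; rewrite /tgrid ltr_pM2r // ltr_nat. Qed.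

Lemma tgrid_inj dt : dt != 0 -> injective (tgrid dt).
Proof. by move=> dt0 p q /mulIf => /(_ dt0) /eqP; rewrite eqr_nat => /eqP. Qed.

Lemma interp_node dt u s m c : dt != 0 -> (c <= m)%N ->
  (interp dt u s m).[tgrid dt (s + c)] = u (s + c)%N.
Proof.
move=> dt0 cm; have cm' : (c < m.+1)%N by [].
have tgrid_neq0 p q : p != q -> tgrid dt p - tgrid dt q != 0.
  by move=> pq; rewrite subr_eq0 (inj_eq (tgrid_inj dt0)).
rewrite /interp horner_sum (bigD1 (Ordinal cm')) //= [X in _ + X]big1 ?addr0.
  rewrite hornerZ horner_prod [X in _ * X]big1 ?mulr1 // => b bc.
  rewrite hornerZ hornerXsubC mulVf // tgrid_neq0 // eqn_add2l.
  by move: bc; rewrite eq_sym -val_eqE.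
move=> a ac; rewrite hornerZ horner_prod (bigD1 (Ordinal cm')) 1?eq_sym //=.
by rewrite hornerZ hornerXsubC subrr !(mulr0, mul0r).
Qed.

Lemma interp_eq0 dt u s m : (forall a, (a <= m)%N -> u (s + a)%N = 0) ->
  interp dt u s m = 0.
Proof.
by move=> u0; rewrite /interp big1 // => a _; rewrite u0 ?scale0r // -ltnS.
Qed.

End grid_interpolation.

Section delta_weights.
Variables (R : realType) (k i : nat).
Hypotheses (i_ge1 : (1 <= i)%N) (i_le_k : (i <= k)%N).
Local Notation mu := (@lebesgue_measure R).

Definition grid_delta (l : nat) : R := (l == k)%:R.

(* For [n >= 3k+1], the piece of [P^k_{i,n}] on [I_j] interpolates only zeros
   when [j > 2k+1], and does not depend on [n] when [j <= 2k+1]. *)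
Let jmax := k.*2.+1.
Let nmin := (3 * k).+1.

Lemma piece_delta_eq0 dt n j : (nmin <= n)%N -> (jmax < j <= n)%N ->
  piece dt grid_delta k i n j = 0.
Proof.
rewrite /nmin /jmax => n_ge /andP[j_gt j_le]; rewrite /piece ifN; last lia.
by rewrite /pjq; case: ifP => _; apply: interp_eq0 => a _;
  rewrite /grid_delta; case: eqP => // E; lia.
Qed.

Lemma piece_delta_stable dt n j : (nmin <= n)%N -> (j <= jmax)%N ->
  piece dt grid_delta k i n j = piece dt grid_delta k i nmin j.
Proof.
rewrite /nmin /jmax => n_ge j_le; rewrite /piece; case: ifP => // _.
by rewrite ifT ?ifT //; lia.
Qed.

Lemma piece_delta_node dt j c : dt != 0 -> (1 <= j <= jmax)%N -> (j.-1 <= c <= j)%N ->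
  (piece dt grid_delta k i nmin j).[tgrid dt c] = grid_delta c.
Proof.
rewrite /jmax /nmin => dt0 j_range c_range; rewrite /piece /pjq; case: ifP => j_le.
  have -> : c = (j + (k - j) - k.-1.+1 + (c - (j + (k - j) - k.-1.+1)))%N by lia.
  by rewrite interp_node //; lia.
rewrite ifT; last by lia.
have -> : c = (j + i - k.+1 + (c - (j + i - k.+1)))%N by lia.
by rewrite interp_node //; lia.
Qed.

Definition dpiece dt j : {poly R} := (piece dt grid_delta k i nmin j)^`().

Lemma Pderiv_delta_stable dt n xi : (nmin <= n)%N ->
  Pderiv dt grid_delta k i n xi = \sum_(1 <= j < jmax.+1)
    (if (tgrid dt j.-1 < xi) && (xi <= tgrid dt j) then (dpiece dt j).[xi] else 0).
Proof.
move=> n_ge; rewrite /Pderiv (big_cat_nat _ (n := jmax.+1)) //=; last first.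
  by rewrite /nmin /jmax in n_ge *; lia.
rewrite [X in _ + X]big_nat_cond [X in _ + X]big1 ?addr0.
  by apply: eq_big_nat => j /andP[_ j_le]; rewrite piece_delta_stable.
move=> j /andP[/andP[j_gt j_le] _].
by rewrite piece_delta_eq0 ?j_gt // deriv0 horner0; case: ifP.
Qed.

(* The interpolant is continuous and vanishes at [t_0] and [t_(2k+1)]. *)
Lemma sum_Rintegral_dpiece dt : 0 < dt ->
  \sum_(1 <= j < jmax.+1)
    \int[mu]_(x in `[tgrid dt j.-1, tgrid dt j]) (dpiece dt j).[x] = 0.
Proof.
move=> dt0; rewrite (@telescope_sumr_eq _ 1 jmax.+1 (fun j => grid_delta j.-1)) //=.
  rewrite /grid_delta /jmax.
  have [-> ->] : (k.*2.+1 == k) = false /\ (0 == k) = false by split; apply/eqP; lia.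
  by rewrite subrr.
move=> j /andP[j_ge j_le]; rewrite Rintegral_deriv_poly; last by apply: ltr_tgrid; lia.
by rewrite !piece_delta_node ?gt_eqF //; lia.
Qed.

Lemma Rintegral_kernel_Pderiv_delta (al dt : R) n : 0 < dt -> (nmin <= n)%N ->
  \int[mu]_(x in `[0, tgrid dt n])
      ((tgrid dt n - x) `^ (- al) * Pderiv dt grid_delta k i n x)
  = \sum_(1 <= j < jmax.+1) \int[mu]_(x in `[tgrid dt j.-1, tgrid dt j])
      ((tgrid dt n - x) `^ (- al) * (dpiece dt j).[x]).
Proof.
move=> dt0 n_ge; set w := fun x => (tgrid dt n - x) `^ (- al).
have cF j : (1 <= j < jmax.+1)%N -> forall x, tgrid dt j.-1 <= x <= tgrid dt j ->
    {for x, continuous (fun x => w x * (dpiece dt j).[x])}.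
  move=> j_range x /andP[_ x_le]; apply: continuousM; last exact: continuous_horner.
  apply: continuous_powR_subr; apply: (le_lt_trans x_le); apply: ltr_tgrid => //.
  by rewrite /nmin /jmax in n_ge j_range *; lia.
have tgrid_j_le j : (j < jmax.+1)%N -> tgrid dt j <= tgrid dt n.
  by move=> j_le; apply: ler_tgrid => //; rewrite /nmin /jmax in n_ge j_le *; lia.
under eq_Rintegral => x _.
  rewrite Pderiv_delta_stable // mulr_sumr.
  under eq_bigr => j _ do
    rewrite fun_if mulr0 (patch_itv_ocE (fun x => w x * (dpiece dt j).[x])).
  over.
rewrite Rintegral_sum //=.
  apply: eq_big_nat => j j_range; apply: Rintegral_patch_itv_oc (cF _ j_range).
  - exact: tgrid_ge0.
  - by apply: tgrid_j_le; case/andP: j_range.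
move=> j; rewrite mem_index_iota => j_range.
apply: integrable_patch_itv_oc (cF _ j_range); first exact: tgrid_ge0.
by apply: tgrid_j_le; case/andP: j_range.
Qed.

Lemma norm_sum_kernel_dpiece_le (al dt : R) n : 0 <= al <= 1 -> 0 < dt ->
  (jmax.*2 <= n)%N ->
  `|\sum_(1 <= j < jmax.+1) \int[mu]_(x in `[tgrid dt j.-1, tgrid dt j])
      ((tgrid dt n - x) `^ (- al) * (dpiece dt j).[x])|
  <= 2 * tgrid dt jmax * tgrid dt n `^ (- al - 1) *
     \sum_(1 <= j < jmax.+1) \int[mu]_(x in `[tgrid dt j.-1, tgrid dt j])
        `|(dpiece dt j).[x]|.
Proof.
move=> al_range dt0 n_ge; set T := tgrid dt n.
have T_ge : 2 * tgrid dt jmax <= T.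
  by rewrite /T /tgrid mulrA -natrM ler_pM2r // ler_nat; lia.
have T0 : 0 < T by apply: (lt_le_trans _ T_ge); rewrite mulr_gt0 // /tgrid mulr_gt0.
set c := T `^ (- al); set A := \sum_(1 <= j < jmax.+1) _.
have -> : A = \sum_(1 <= j < jmax.+1)
    (\int[mu]_(x in `[tgrid dt j.-1, tgrid dt j]) ((T - x) `^ (- al) * (dpiece dt j).[x])
     - c * \int[mu]_(x in `[tgrid dt j.-1, tgrid dt j]) (dpiece dt j).[x]).
  by rewrite sumrB -mulr_sumr sum_Rintegral_dpiece // mulr0 subr0.
rewrite mulr_sumr.
apply: le_trans (ler_norm_sum _ _ _) _; apply: ler_sum_nat => j /andP[j_ge j_le].
apply: le_norm_Rintegral_weight; last 2 first.
- exact: continuous_horner.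
- move=> x /andP[x_ge x_le]; apply: normr_powRN_subr_le => //.
  rewrite (le_trans (tgrid_ge0 _ dt0) x_ge) /=.
  by rewrite (le_trans x_le) // ler_tgrid //; lia.
move=> x /andP[_ x_le]; apply: continuous_powR_subr.
apply: (le_lt_trans x_le); apply: (le_lt_trans _ (_ : tgrid dt jmax < T)).
  by apply: ler_tgrid; lia.
by apply: ltr_tgrid => //; lia.
Qed.

Lemma omega_delta_bound (al dt : R) : 0 < al < 1 -> 0 < dt ->
  exists C, forall m, (jmax.*2 <= m)%N ->
    `|omega al dt k i m| <= C * m%:R `^ (- (al + 1)).
Proof.
move=> /andP[al0 al1] dt0.
pose K := \sum_(1 <= j < jmax.+1)
  \int[mu]_(x in `[tgrid dt j.-1, tgrid dt j]) `|(dpiece dt j).[x]|.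
set C1 := 2 * tgrid dt jmax * dt `^ (- al - 1).
have K0 : 0 <= K by apply: sumr_ge0 => j _; apply: Rintegral_ge0.
exists (`|dt `^ al| * `|(Gamma (1 - al))^-1| * C1 * K) => m m_ge.
set n := (m + k)%N.
have n_ge : (nmin <= n)%N by rewrite /n /nmin /jmax in m_ge *; lia.
have n_m : n%:R `^ (- al - 1) <= m%:R `^ (- (al + 1)).
  rewrite -opprD; apply: natr_powRN_le; first by rewrite addr_ge0 // ltW.
  by rewrite /n /jmax in m_ge *; lia.
have sum_le : `|\sum_(1 <= j < jmax.+1) \int[mu]_(x in `[tgrid dt j.-1, tgrid dt j])
      ((tgrid dt n - x) `^ (- al) * (dpiece dt j).[x])| <= C1 * (K * m%:R `^ (- (al + 1))).
  apply: le_trans (norm_sum_kernel_dpiece_le _ dt0 _) _.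
  - by rewrite !ltW.
  - by rewrite /n /jmax in m_ge *; lia.
  have -> : tgrid dt n `^ (- al - 1) = n%:R `^ (- al - 1) * dt `^ (- al - 1).
    by rewrite /tgrid powRM ?ler0n ?(ltW dt0).
  have -> : 2 * tgrid dt jmax * (n%:R `^ (- al - 1) * dt `^ (- al - 1)) * K =
    C1 * (K * n%:R `^ (- al - 1)) by rewrite /C1; ring.
  rewrite ler_wpM2l ?ler_wpM2l //.
  by rewrite /C1 mulr_ge0 ?powR_ge0 // mulr_ge0 // tgrid_ge0.
clearbody C1; rewrite /omega /Dfrac -/grid_delta -/n Rintegral_kernel_Pderiv_delta //.
by rewrite !normrM -!mulrA ler_wpM2l // ler_wpM2l.
Qed.

End delta_weights.

Theorem lemma3p5 (R : realType) (alpha dt : R) (k i : nat) :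
  0 < alpha < 1 -> 0 < dt -> (1 <= i)%N -> (i <= k)%N -> (k <= 6)%N ->
  cvgn (series (fun m : nat => `|omega alpha dt k i m|)).
Proof.
move=> alpha_range dt0 i_ge1 i_le_k _.
have [C omega_le] := omega_delta_bound i_ge1 i_le_k alpha_range dt0.
apply: is_cvg_series_le_natr_powRN omega_le => //.
by rewrite ltrDr; case/andP: alpha_range.
Qed.
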